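(* Let $G$ be a finite group and $n\ge 1$ an integer. If there exists a $2$-starter under $G$ (i.e. in $K_{\overline{G}}$), then there exists a $2n$-starter under $G\times\mathbb{Z}_n$ (i.e. in $K_{\overline{G\times\mathbb{Z}_n}}$).
   Context: For a finite group $G$, $\overline{G}=G\cup\{\infty\}$, and $K_V$ denotes the complete graph on vertex set $V$. $G$ acts on $\overline{G}$ by right multiplication, with $\infty g=\infty$; for a subgraph $F$ of $K_{\overline{G}}$ and $g\in G$, $Fg$ is the graph obtained by replacing every vertex $v$ by $vg$, and the $G$-stabilizer of $F$ is $\{g\in G: Fg=F\}$. A $k$-factor of $K_V$ is a spanning $k$-regular subgraph. For a graph $\Gamma$ with vertex set $\overline{G}$, its list of differences is the multiset $\Delta\Gamma=\{ab^{-1},\ ba^{-1} : [a,b]\in E(\Gamma),\ a\neq\infty\neq b\}$. Given a finite group $G$ with $k$ dividing $|G|$, a $k$-factor $F$ of $K_{\overline{G}}$ is a $k$-starter under $G$ if (1) the $G$-stabilizer of $F$ has order $k$, and (2) $\Delta F$ contains every element of $G\setminus\{1_G\}$. In $G\times\mathbb{Z}_n$ the group operation is $(g,i)(h,j)=(gh,i+j)$. *)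

From HB Require Import structures.
From mathcomp Require Import all_boot all_fingroup.
Set Implicit Arguments. Unset Strict Implicit. Unset Printing Implicit Defensive.
Local Open Scope group_scope.

(* Vertices of K_{G-bar}: [option gT], with [None] playing the role of infinity. *)

Section Starters.
Variable gT : finGroupType.

Definition vact (v : option gT) (g : gT) : option gT := omap (fun x => x * g) v.

Definition graph_act (E : {set {set option gT}}) (g : gT) : {set {set option gT}} :=
  (fun e : {set option gT} => (fun v => vact v g) @: e) @: E.

Definition gstab (E : {set {set option gT}}) : {set gT} :=
  [set g : gT | graph_act E g == E].

Definition is_kfactor (k : nat) (E : {set {set option gT}}) : Prop :=
  (forall e, e \in E -> #|e| = 2) /\
  (forall v : option gT, #|[set e in E | v \in e]| = k).

Definition in_diffs (E : {set {set option gT}}) (g : gT) : Prop :=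
  exists a b : gT, [set Some a; Some b] \in E /\ (a * b^-1 = g \/ b * a^-1 = g).

Definition is_starter (k : nat) (E : {set {set option gT}}) : Prop :=
  [/\ (k %| #|gT|)%N, is_kfactor k E, #|gstab E| = k &
      forall g : gT, g != 1 -> in_diffs E g].
End Starters.

From mathcomp Require Import all_boot all_fingroup zmodp zify.
Set Implicit Arguments. Unset Strict Implicit. Unset Printing Implicit Defensive.

(* A k-starter E under G lifts to a (k n)-starter under G x Z_n (the theorem
   is the case k = 2): join (x, i) and (y, j) whenever x and y are joined in E
   (infinity lying over itself), and in addition make each fibre {a} x Z_n
   over a neighbour a of infinity a complete graph.  A vertex (a, i) keeps its
   k neighbours, each blown up to a fibre of size n, except that the neighbour
   infinity stays single and is compensated by the n - 1 new fibre neighbours;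
   so the lift is (k n)-regular.  Right translation by (g, i) commutes with the
   projection to G-bar, so the stabilizer of the lift is the full preimage
   (stab E) x Z_n, of order k n.  A difference (h, i) with h != 1 comes from a
   lifted edge of E over a difference h of E, and (1, i) with i != 0 from an
   edge inside a complete fibre. *)

Lemma set2_eq (T : finType) (u v u' v' : T) : [set u; v] = [set u'; v'] ->
  (u = u' /\ v = v') \/ (u = v' /\ v = u').
Proof.
move=> eq_uv.
have /set2P u_in : u \in [set u'; v'] by rewrite -eq_uv set21.
have /set2P v_in : v \in [set u'; v'] by rewrite -eq_uv set22.
have /set2P u'_in : u' \in [set u; v] by rewrite eq_uv set21.
have /set2P v'_in : v' \in [set u; v] by rewrite eq_uv set22.
intuition congruence.
Qed.

Section Graphs.
Variable V : finType.
Implicit Types (E : {set {set V}}) (r : rel V).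

Definition adj E u v := [set u; v] \in E.

Definition pair_edges E := forall e, e \in E -> #|e| = 2.

Definition edges_of r : {set {set V}} :=
  [set e | [exists u, exists v, (e == [set u; v]) && r u v]].

Lemma adjC E u v : adj E u v = adj E v u.
Proof. by rewrite /adj setUC. Qed.

Lemma adj_irr E u : pair_edges E -> adj E u u = false.
Proof. by move=> E2; apply/negP => /E2; rewrite setUid cards1. Qed.

Lemma pair_edgesP E e : pair_edges E -> e \in E -> exists u v, e = [set u; v].
Proof. by move=> E2 /E2 /eqP /cards2P [u [v [_ ->]]]; exists u, v. Qed.

Lemma card_incident_adj E v : pair_edges E ->
  #|[set e in E | v \in e]| = #|[set w | adj E v w]|.
Proof.
move=> E2.
have -> : [set e in E | v \in e] = (fun w => [set v; w]) @: [set w | adj E v w].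
  apply/setP => e; rewrite inE; apply/andP/imsetP.
  - case=> eE; have [x [y e_xy]] := pair_edgesP E2 eE; subst e.
    rewrite !inE => /orP [/eqP ->|/eqP ->]; first by exists y; rewrite // inE.
    by exists x; rewrite ?inE /adj setUC.
  - by case=> w; rewrite inE => vw ->; rewrite !inE eqxx.
apply: card_in_imset => w w'; rewrite !inE => vw _ eq_vw.
have wv : w != v by apply: contraTneq vw => ->; rewrite adj_irr.
have : w \in [set v; w'] by rewrite -eq_vw !inE eqxx orbT.
by rewrite !inE (negbTE wv) => /eqP.
Qed.

Section EdgesOf.
Variable r : rel V.
Hypothesis rC : symmetric r.
Hypothesis r_irr : irreflexive r.

Lemma edges_of_pair : pair_edges (edges_of r).
Proof.
move=> e; rewrite inE => /existsP [u /existsP [v /andP [/eqP -> ruv]]].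
by rewrite cards2; case: eqP ruv => // ->; rewrite r_irr.
Qed.

Lemma adj_edges_of u v : adj (edges_of r) u v = r u v.
Proof.
apply/idP/idP => [|ruv]; last first.
  by rewrite /adj inE; apply/existsP; exists u; apply/existsP; exists v; rewrite eqxx.
rewrite /adj inE => /existsP [u' /existsP [v' /andP [/eqP /esym/set2_eq]]].
by case=> [[-> ->]|[-> ->]] //; rewrite rC.
Qed.

End EdgesOf.
End Graphs.

Lemma card_set_option (T : finType) (P : pred (option T)) :
  #|[set w | P w]| = (P None + #|[set y | P (Some y)]|)%N.
Proof.
have -> : [set w | P w] =
    (if P None then [set None] else set0) :|: Some @: [set y | P (Some y)].
  apply/setP => -[y|]; rewrite !inE.
    by rewrite (mem_imset _ _ (@Some_inj _)) inE; case: (P None); rewrite ?inE.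
  by case: (P None); rewrite ?inE //=; apply/esym/negbTE/imsetP => -[].
rewrite cardsU card_imset; last exact: Some_inj.
suff -> : (if P None then [set None] else set0) :&: Some @: [set y | P (Some y)] = set0.
  by case: (P None); rewrite ?cards1 ?cards0 subn0.
apply/setP => w; rewrite !inE; case: (P None); rewrite ?inE //.
by case: eqP => // ->; apply/negbTE/imsetP => -[].
Qed.

Local Open Scope group_scope.

Lemma gstabP (gT : finGroupType) (E : {set {set option gT}}) g : pair_edges E ->
  reflect (forall u v, adj E u v -> adj E (vact u g) (vact v g)) (g \in gstab E).
Proof.
move=> E2; rewrite /gstab inE.
have act2 (u v : option gT) :
    (fun w => vact w g) @: [set u; v] = [set vact u g; vact v g].
  by rewrite imsetU1 imset_set1.
apply: (iffP eqP) => [actE u v uv | stabE].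
  by rewrite /adj -act2 -actE; apply: imset_f.
apply/eqP; rewrite eqEcard; apply/andP; split.
  apply/subsetP => _ /imsetP [e eE ->].
  have [u [v e_uv]] := pair_edgesP E2 eE; subst e.
  by rewrite act2; apply: stabE.
rewrite card_imset //; apply: imset_inj => -[x|] [y|] //= [] /mulIg -> //.
Qed.

Section Lift.
Variables (gT : finGroupType) (m : nat) (E : {set {set option gT}}).
Hypothesis E2 : pair_edges E.
Notation T := (gT * 'I_m.+1)%type.

Definition proj_vertex (w : option T) : option gT := omap fst w.

Definition lift_rel (u v : option T) : bool :=
  adj E (proj_vertex u) (proj_vertex v) ||
  if (u, v) is (Some x, Some y) then
    [&& x.1 == y.1, x.2 != y.2 & adj E None (Some x.1)]
  else false.

Definition lift_edges : {set {set option T}} := edges_of lift_rel.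

Lemma lift_relC : symmetric lift_rel.
Proof.
move=> u v; rewrite /lift_rel adjC; congr orb; case: u v => [x|] [y|] //=.
by rewrite [y.1 == _]eq_sym [y.2 == _]eq_sym; case: eqP => // ->.
Qed.

Lemma lift_rel_irr : irreflexive lift_rel.
Proof. by case=> [x|]; rewrite /lift_rel adj_irr //= !eqxx. Qed.

Lemma lift_pair_edges : pair_edges lift_edges.
Proof. exact: edges_of_pair lift_rel_irr. Qed.

Lemma adj_lift u v : adj lift_edges u v = lift_rel u v.
Proof. exact: (adj_edges_of lift_relC). Qed.

Lemma card_fibre (A : {set gT}) : #|[set y : T | y.1 \in A]| = (#|A| * m.+1)%N.
Proof.
have -> : [set y : T | y.1 \in A] = setX A setT by apply/setP => y; rewrite !inE andbT.
by rewrite cardsX cardsT card_ord.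
Qed.

Lemma proj_vact (w : option T) (g : T) :
  proj_vertex (vact w g) = vact (proj_vertex w) g.1.
Proof. by case: w. Qed.

Lemma gstab_lift g : (g \in gstab lift_edges) = (g.1 \in gstab E).
Proof.
apply/(gstabP _ lift_pair_edges)/(gstabP _ E2) => stabE u v.
  pose sect (w : option gT) : option T := omap (fun a => (a, 1)) w.
  have proj_sect w : proj_vertex (sect w) = w by case: w.
  move=> uv; have := stabE (sect u) (sect v).
  rewrite !adj_lift /lift_rel !proj_vact !proj_sect uv => /(_ isT) /orP [] //.
  by case: u v uv => [a|] [b|] //= _; rewrite eqxx andbF.
rewrite !adj_lift /lift_rel !proj_vact => /orP [/stabE -> //|].
case: u v => [x|] [y|] //= /and3P [x1y1 x2y2 x1_inf].
by rewrite !(inj_eq (mulIg _)) x1y1 x2y2 (stabE _ _ x1_inf) orbT.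
Qed.

Lemma card_gstab_lift : #|gstab lift_edges| = (#|gstab E| * m.+1)%N.
Proof. by rewrite -card_fibre; apply: eq_card => g; rewrite [RHS]inE -gstab_lift. Qed.

Lemma lift_diffs : (exists a, adj E None (Some a)) ->
  (forall h : gT, h != 1 -> in_diffs E h) ->
  forall g : T, g != 1 -> in_diffs lift_edges g.
Proof.
move=> [a inf_a] diffsE [h i].
have diff_mk (x y : gT) (j : 'I_m.+1) : (x, j) * (y, 1)^-1 = (x * y^-1, j * 1^-1).
  by [].
have [-> g_ne1 | h_ne1 _] := eqVneq h 1.
  have i_ne1 : i != 1 by apply: contraNneq g_ne1 => ->.
  exists (a, i), (a, 1); split; last by left; rewrite diff_mk invg1 mulg1 mulgV.
  by rewrite -[_ \in _]/(adj _ _ _) adj_lift /lift_rel /= eqxx i_ne1 inf_a orbT.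
have [x [y [xy [<- | <-]]]] := diffsE h h_ne1.
  exists (x, i), (y, 1); split; last by left; rewrite diff_mk invg1 mulg1.
  by rewrite -[_ \in _]/(adj _ _ _) adj_lift /lift_rel /= (xy : adj E _ _).
exists (y, i), (x, 1); split; last by left; rewrite diff_mk invg1 mulg1.
by rewrite -[_ \in _]/(adj _ _ _) adj_lift /lift_rel /= adjC (xy : adj E _ _).
Qed.

Variable k : nat.
Hypothesis E_deg : forall v, #|[set e in E | v \in e]| = k.

Lemma card_adj_option v : (adj E v None + #|[set a | adj E v (Some a)]|)%N = k.
Proof. by rewrite -card_set_option -card_incident_adj. Qed.

Lemma lift_deg_None : #|[set e in lift_edges | None \in e]| = (k * m.+1)%N.
Proof.
rewrite (card_incident_adj _ lift_pair_edges) card_set_option adj_lift.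
rewrite lift_rel_irr -(card_adj_option None) adj_irr // -card_fibre.
by congr addn; apply: eq_card => y; rewrite !inE adj_lift /lift_rel orbF.
Qed.

Lemma lift_deg_Some x : #|[set e in lift_edges | Some x \in e]| = (k * m.+1)%N.
Proof.
rewrite (card_incident_adj _ lift_pair_edges) card_set_option adj_lift.
rewrite /lift_rel /= orbF -(card_adj_option (Some x.1)) adjC.
set B := [set a | adj E (Some x.1) (Some a)].
set c := adj E None (Some x.1).
have -> : [set y | adj lift_edges (Some x) (Some y)] =
    [set y : T | y.1 \in B] :|: [set y : T | [&& x.1 == y.1, x.2 != y.2 & c]].
  by apply/setP => y; rewrite !inE adj_lift.
have card_extra : #|[set y : T | [&& x.1 == y.1, x.2 != y.2 & c]]| = (c * m)%N.
  case: c; last by apply/eqP; rewrite cards_eq0; apply/eqP/setP => y; rewrite !inE !andbF.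
  rewrite (_ : [set y : T | _] = setX [set x.1] [set~ x.2]).
    by rewrite cardsX cards1 cardsC1 card_ord.
  by apply/setP => y; rewrite !inE andbT [x.1 == _]eq_sym [x.2 == _]eq_sym.
have disjoint_extra :
    [set y : T | y.1 \in B] :&: [set y : T | [&& x.1 == y.1, x.2 != y.2 & c]] = set0.
  apply/setP => y; rewrite !inE; apply/negbTE.
  by case: eqP => [<- | _]; rewrite ?adj_irr ?andbF.
rewrite cardsU disjoint_extra cards0 subn0 card_fibre card_extra.
by rewrite mulnDl [(c * m.+1)%N]mulnS; lia.
Qed.

Lemma lift_kfactor : is_kfactor (k * m.+1) lift_edges.
Proof.
split; first exact: lift_pair_edges.
by case=> [x|]; [exact: lift_deg_Some | exact: lift_deg_None].
Qed.

End Lift.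

Theorem starter_lift (gT : finGroupType) (m k : nat) (E : {set {set option gT}}) :
  is_starter k E -> is_starter (k * m.+1) (lift_edges m E).
Proof.
case=> k_dvdG [E2 E_deg] stabE diffsE.
have k_gt0 : (0 < k)%N.
  rewrite lt0n; apply: contraTneq k_dvdG => ->.
  by rewrite dvd0n -lt0n; apply/card_gt0P; exists 1.
have inf_nbr : exists a, adj E None (Some a).
  have := card_adj_option E2 E_deg None; rewrite adj_irr // add0n => card_nbrs.
  have /set0Pn [a] : [set a | adj E None (Some a)] != set0.
    by rewrite -card_gt0 card_nbrs.
  by rewrite inE; exists a.
split.
- by rewrite card_prod card_ord dvdn_mul.
- exact: lift_kfactor.
- by rewrite (card_gstab_lift m E2) stabE.
- exact: lift_diffs.
Qed.

Theorem theorem4p1 (gT : finGroupType) (m : nat) :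
  (exists E : {set {set option gT}}, is_starter 2 E) ->
  exists E : {set {set option (gT * 'I_m.+1)}}, is_starter (2 * m.+1) E.
Proof. by case=> E starterE; exists (lift_edges m E); apply: starter_lift. Qed.
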